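(* For every $z_j\in Z_\theta$ and every $t=0,1,\dots,T-2$, $$\bar\psi_t(\theta,z_j)\le\gamma_t\theta+\theta\sum_{n=1}^{T-1-t}\alpha^n\gamma_{t+n}\prod_{m=0}^{n-1}F_{t+m}\big(z_j+(m+1)\theta-s_{t+m+1}\big).$$
   Context: Model. Fix an integer horizon $T\ge 2$, a discount factor $\alpha\in(0,1]$, and for $t=0,\dots,T-1$: unit ordering costs $c_t\in\mathbb R$, a salvage coefficient $c_T\in\mathbb R$, setup costs $K_t\ge 0$, functions $G_t:\mathbb R\to\mathbb R$, and independent nonnegative random demands $D_0,\dots,D_{T-1}$ with right-continuous distribution functions $F_t$ and finite means; all expectations appearing are assumed finite. Put $C_t(y)=(c_t-\alpha c_{t+1})y+G_t(y)+\alpha c_{t+1}E[D_t]$. Standing assumptions: (i) each $C_t$ is convex with $C_t(y)\to+\infty$ as $|y|\to\infty$; (ii) $K_t\ge \alpha K_{t+1}$ for $t=0,\dots,T-2$; (iii) there are constants $\gamma_t\ge 0$ with $|C_t(x)-C_t(y)|\le\gamma_t|x-y|$ for all $x,y$. Grid construction. Fix $\theta>0$, $z_m=m\theta$, $Z_\theta=\{z_m:m\in\mathbb Z\}$, $f_t(n)=F_t(z_{n+1})-F_t(z_n)$ ($n\ge -1$). $C^m_t=\min\{y: C_t(y)=\min_x C_t(x)\}$; with $z_{n_0}<C^m_t\le z_{n_0+1}$, $S^U_t=\min\{z_m\in Z_\theta: z_m\ge C^m_t,\ C_t(z_m)>C_t(z_{n_0})+K_t\}$. $s_{T-1}$ is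 a point with $s_{T-1}\le C^m_{T-1}$, $C_{T-1}(s_{T-1})=C_{T-1}(C^m_{T-1})+K_{T-1}$; $\bar I_{T-1}=s_{T-1}$. For $t=T-2,\dots,0$: $I_t=\max\{z_m\in Z_\theta: z_m<\min(\bar I_{t+1}-\theta,C^m_t)\}$, $\bar I_t=\max\{z_m\in Z_\theta: z_m\le I_t,\ C_t(z_m)>C_t(I_t)+K_t\}+\theta$. $H_{T-1}=C_{T-1}$, $S_{T-1}=C^m_{T-1}$; $V_t(y)=H_t(S_t)+K_t$ for $y<s_t$, $V_t(y)=H_t(y)$ for $y\ge s_t$. For $t=T-2,\dots,0$: $H_t(y)=C_t(y)+\alpha\sum_{n=-1}^\infty V_{t+1}(y-z_n)f_t(n)$; $S_t=\max\{z_m\in Z_\theta: I_t\le z_m\le S^U_t,\ H_t(z_m)=\min\{H_t(z_n):z_n\in Z_\theta, I_t\le z_n\le S^U_t\}\}$; $s_t=S_t$ if $K_t=0$, else $s_t=\min\{z_m\in Z_\theta:\bar I_t\le z_m\le S_t,\ H_t(z_m)\le H_t(S_t)+K_t\}$. Upper estimate functions. $\bar\psi_{T-1}(x,y)=\gamma_{T-1}x$; $\bar\varphi_{T-1}(x,y)=0$ if $y<s_{T-1}$ and $=\gamma_{T-1}x$ if $y\ge s_{T-1}$. For $t=0,\dots,T-2$, with $n$ the integer such that $z_{n-1}\le y-s_{t+1}<z_n$: $\bar\psi_t(x,y)=\gamma_tx$ if $y<s_{t+1}-\theta$, else $\bar\psi_t(x,y)=\gamma_tx+\alpha\sum_{m=-1}^{n-1}\bar\varphi_{t+1}(x,y-z_m)f_t(m)$;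 $\bar\varphi_t(x,y)=0$ if $y<s_t$, $=\bar\psi_t(y-s_t+\theta,y)$ if $y\ge s_t$ and $y-x<s_t$, $=\bar\psi_t(x,y)$ if $y\ge s_t$ and $y-x\ge s_t$. *)

From Stdlib Require Import Reals ZArith ClassicalEpsilon.
From Coquelicot Require Import Coquelicot.
Open Scope R_scope.

(** Generic selection operators (Hilbert choice).  When the described
    minimiser / maximiser exists (as it does under the paper's assumptions),
    these return it. *)
Definition zmin (P : Z -> Prop) : Z :=
  epsilon (inhabits 0%Z) (fun m => P m /\ forall m', P m' -> (m <= m')%Z).
Definition zmax (P : Z -> Prop) : Z :=
  epsilon (inhabits 0%Z) (fun m => P m /\ forall m', P m' -> (m' <= m)%Z).
Definition rmin (P : R -> Prop) : R :=
  epsilon (inhabits 0) (fun y => P y /\ forall y', P y' -> y <= y').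

Fixpoint sum_from1 (N : nat) (g : nat -> R) : R :=
  match N with O => 0 | S N' => sum_from1 N' g + g (S N') end.
Fixpoint prod_upto (n : nat) (g : nat -> R) : R :=
  match n with O => 1 | S n' => prod_upto n' g * g n' end.

Section Construction.
Variables (T : nat) (alpha theta : R) (c K : nat -> R) (G F : nat -> R -> R)
          (mu : nat -> R) (gamma : nat -> R).
(* mu t stands for E[D_t]. *)

Definition zg (m : Z) : R := IZR m * theta.

Definition Cfun (t : nat) (y : R) : R :=
  (c t - alpha * c (S t)) * y + G t y + alpha * c (S t) * mu t.

Definition ftab (t : nat) (n : Z) : R := F t (zg (n + 1)) - F t (zg n).

Definition Cm (t : nat) : R := rmin (fun y => forall x, Cfun t y <= Cfun t x).

Definition n0 (t : nat) : Z :=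
  epsilon (inhabits 0%Z) (fun m => zg m < Cm t <= zg (m + 1)).

Definition SU (t : nat) : R :=
  zg (zmin (fun m => Cm t <= zg m /\ Cfun t (zg (n0 t)) + K t < Cfun t (zg m))).

Definition sLast : R :=
  epsilon (inhabits 0) (fun s => s <= Cm (T - 1) /\
            Cfun (T - 1) s = Cfun (T - 1) (Cm (T - 1)) + K (T - 1)).

Definition I_of (t : nat) (Ib1 : R) : R :=
  zg (zmax (fun m => zg m < Rmin (Ib1 - theta) (Cm t))).
Definition Ibar_of (t : nat) (It : R) : R :=
  zg (zmax (fun m => zg m <= It /\ Cfun t It + K t < Cfun t (zg m))) + theta.

Fixpoint Ibar_k (k : nat) : R :=
  match k with
  | O => sLast
  | S k' => let t := (T - 1 - k)%nat in Ibar_of t (I_of t (Ibar_k k'))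
  end.

Definition Vfun (H : R -> R) (Sv sv Kn : R) (y : R) : R :=
  if Rlt_dec y sv then H Sv + Kn else H y.
Definition Vof (p : (R -> R) * R * R) (Kn : R) : R -> R :=
  let '(H1, S1, s1) := p in Vfun H1 S1 s1 Kn.

(** i-th term (i = n+1, n >= -1) of sum_{n>=-1} V(y - z_n) f_t(n) *)
Definition Hterm (t : nat) (V : R -> R) (y : R) (i : nat) : R :=
  V (y - zg (Z.of_nat i - 1)) * ftab t (Z.of_nat i - 1).

(** (H_t, S_t, s_t) for t = T-1-k *)
Fixpoint stage (k : nat) : (R -> R) * R * R :=
  match k with
  | O => (Cfun (T - 1), Cm (T - 1), sLast)
  | S k' =>
      let t := (T - 1 - k)%nat in
      let V := Vof (stage k') (K (S t)) in
      let H := fun y => Cfun t y + alpha * Series (Hterm t V y) in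
      let lo := I_of t (Ibar_k k') in
      let hi := SU t in
      let St := zg (zmax (fun m => (lo <= zg m <= hi) /\
                    forall n, lo <= zg n <= hi -> H (zg m) <= H (zg n))) in
      let st := if Req_EM_T (K t) 0 then St
                else zg (zmin (fun m => (Ibar_k k <= zg m <= St) /\
                                        H (zg m) <= H St + K t)) in
      (H, St, st)
  end.

Definition s_ (t : nat) : R := snd (stage (T - 1 - t)).

Definition H_expectations_finite : Prop :=
  forall k, (k < T - 1)%nat -> forall y,
    ex_series (Hterm (T - 2 - k) (Vof (stage k) (K (T - 1 - k))) y).

Definition nidx (y sn : R) : Z :=
  epsilon (inhabits 0%Z) (fun n => zg (n - 1) <= y - sn < zg n).

Fixpoint psiphi (k : nat) : (R -> R -> R) * (R -> R -> R) :=
  match k with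
  | O => (fun x _ => gamma (T - 1) * x,
          fun x y => if Rlt_dec y (s_ (T - 1)) then 0 else gamma (T - 1) * x)
  | S k' =>
      let phi1 := snd (psiphi k') in
      let t := (T - 1 - k)%nat in
      let psi := fun x y =>
        if Rlt_dec y (s_ (S t) - theta) then gamma t * x
        else gamma t * x + alpha *
          sum_f_R0 (fun i => phi1 x (y - zg (Z.of_nat i - 1)) * ftab t (Z.of_nat i - 1))
                   (Z.to_nat (nidx y (s_ (S t)))) in
      let phi := fun x y =>
        if Rlt_dec y (s_ t) then 0
        else if Rlt_dec (y - x) (s_ t) then psi (y - s_ t + theta) y
        else psi x y in
      (psi, phi)
  end.

Definition psibar (t : nat) : R -> R -> R := fst (psiphi (T - 1 - t)).
Definition phibar (t : nat) : R -> R -> R := snd (psiphi (T - 1 - t)).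

End Construction.

From Stdlib Require Import Reals ZArith Lia Lra ClassicalEpsilon.
From Coquelicot Require Import Coquelicot.
Open Scope R_scope.

(* Write B_t(y) for the right-hand side at the point y.  It satisfies the recursion
   B_t(y) = gamma_t theta + alpha F_t(y + theta - s_{t+1}) B_{t+1}(y + theta), and B_t is
   nonnegative and nondecreasing.  By backward induction, phibar_t(theta, .) and
   psibar_t(theta, .) are bounded by B_t on the grid.  In psibar_t each term
   phibar_{t+1}(theta, y - z_m) is at most B_{t+1}(y + theta) since m >= -1, and the masses
   f_t(-1), ..., f_t(n-1) telescope to F_t(z_n) <= F_t(y + theta - s_{t+1}).  In phibar_t the
   first argument y - s_t + theta equals theta on the grid, because s_t is a grid point. *)

Lemma sum_from1_ext N g h : (forall n, (1 <= n <= N)%nat -> g n = h n) ->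
  sum_from1 N g = sum_from1 N h.
Proof.
  induction N as [|N IH]; intros Hgh; simpl; [reflexivity|].
  rewrite IH, Hgh; [reflexivity|lia|intros; apply Hgh; lia].
Qed.

Lemma sum_from1_scal N a g : sum_from1 N (fun n => a * g n) = a * sum_from1 N g.
Proof. induction N as [|N IH]; simpl; [ring|rewrite IH; ring]. Qed.

Lemma sum_from1_shift N g : sum_from1 (S N) g = g 1%nat + sum_from1 N (fun n => g (S n)).
Proof. induction N as [|N IH]; simpl in *; [ring|rewrite IH; ring]. Qed.

Lemma prod_upto_ext n g h : (forall m, (m < n)%nat -> g m = h m) ->
  prod_upto n g = prod_upto n h.
Proof.
  induction n as [|n IH]; intros Hgh; simpl; [reflexivity|].
  rewrite IH, Hgh; [reflexivity|lia|intros; apply Hgh; lia].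
Qed.

Lemma prod_upto_shift n g : prod_upto (S n) g = g 0%nat * prod_upto n (fun m => g (S m)).
Proof. induction n as [|n IH]; simpl in *; [ring|rewrite IH; ring]. Qed.

Lemma nat_down_ind (P : nat -> Prop) (N : nat) :
  P N -> (forall t, (t < N)%nat -> P (S t) -> P t) -> forall t, (t <= N)%nat -> P t.
Proof.
  intros HN Hstep t Ht. replace t with (N - (N - t))%nat by lia.
  induction (N - t)%nat as [|k IH]; [now rewrite Nat.sub_0_r|].
  destruct (Nat.lt_ge_cases k N).
  - apply Hstep; [lia|]. now replace (S (N - S k)) with (N - k)%nat by lia.
  - now replace (N - S k)%nat with (N - k)%nat by lia.
Qed.

Lemma cdf_nonneg (f : R -> R) :
  (forall x y, x <= y -> f x <= f y) -> (forall x, x < 0 -> f x = 0) -> forall x, 0 <= f x.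
Proof.
  intros Hmono Hneg x. rewrite <- (Hneg (Rmin x (-1))) by (unfold Rmin; destruct Rle_dec; lra).
  apply Hmono, Rmin_l.
Qed.

Section Grid.
Variable theta : R.
Hypothesis Htheta : 0 < theta.

Lemma zg_sub a b : zg theta a - zg theta b = zg theta (a - b).
Proof. unfold zg. rewrite minus_IZR. ring. Qed.

Lemma zg_succ a : zg theta (a + 1) = zg theta a + theta.
Proof. unfold zg. rewrite plus_IZR. ring. Qed.

Lemma zg_lt_inv a b : zg theta a < zg theta b -> (a < b)%Z.
Proof. unfold zg. intros H. apply lt_IZR, Rmult_lt_reg_r with theta; assumption. Qed.

Lemma zg_window_eq a b : zg theta a <= zg theta b -> zg theta b < zg theta a + theta -> b = a.
Proof.
  intros Hlo Hhi. rewrite <- zg_succ in Hhi.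
  apply zg_lt_inv in Hhi. destruct (Z.lt_ge_cases b a) as [Hba|]; [|lia].
  apply IZR_lt in Hba. unfold zg in Hlo. nra.
Qed.

Lemma nidx_spec y sn :
  zg theta (nidx theta y sn - 1) <= y - sn < zg theta (nidx theta y sn).
Proof.
  unfold nidx. apply epsilon_spec.
  exists (up ((y - sn) / theta)). destruct (archimed ((y - sn) / theta)) as [Hup1 Hup2].
  set (u := (y - sn) / theta) in *. unfold zg. rewrite minus_IZR.
  replace (y - sn) with (u * theta) by (unfold u; field; lra).
  split; [apply Rmult_le_compat_r|apply Rmult_lt_compat_r]; lra.
Qed.

Lemma ftab_telescope F t M :
  sum_f_R0 (fun i => ftab theta F t (Z.of_nat i - 1)) M =
  F t (zg theta (Z.of_nat M)) - F t (zg theta (-1)).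
Proof.
  induction M as [|M IH]; [reflexivity|].
  rewrite tech5, IH. unfold ftab.
  replace (Z.of_nat (S M) - 1 + 1)%Z with (Z.of_nat (S M)) by lia.
  replace (Z.of_nat (S M) - 1)%Z with (Z.of_nat M) by lia. ring.
Qed.

End Grid.

Section Bound.
Variables (T : nat) (alpha theta : R) (F : nat -> R -> R) (gamma s : nat -> R).

Definition bound_term (t : nat) (y : R) (n : nat) : R :=
  alpha ^ n * gamma (t + n)%nat *
  prod_upto n (fun m => F (t + m)%nat (y + INR (m + 1) * theta - s (t + m + 1)%nat)).

Definition bound (t : nat) (y : R) : R :=
  gamma t * theta + theta * sum_from1 (T - 1 - t) (bound_term t y).

Lemma bound_term_succ t y n :
  bound_term t y (S n) = alpha * F t (y + theta - s (S t)) * bound_term (S t) (y + theta) n.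
Proof.
  unfold bound_term. rewrite prod_upto_shift.
  rewrite (prod_upto_ext n _
    (fun m => F (S t + m)%nat (y + theta + INR (m + 1) * theta - s (S t + m + 1)%nat))).
  - replace (t + 0 + 1)%nat with (S t) by lia. replace (t + S n)%nat with (S t + n)%nat by lia.
    simpl INR. simpl pow. replace (y + 1 * theta) with (y + theta) by ring. rewrite Nat.add_0_r. ring.
  - intros m _. replace (t + S m)%nat with (S t + m)%nat by lia.
    replace (S m + 1)%nat with (S (m + 1)) by lia. rewrite S_INR. f_equal. ring.
Qed.

Lemma bound_last y : bound (T - 1) y = gamma (T - 1)%nat * theta.
Proof. unfold bound. rewrite Nat.sub_diag. simpl. ring. Qed.

Lemma bound_step t y : (t < T - 1)%nat ->
  bound t y = gamma t * theta + alpha * F t (y + theta - s (S t)) * bound (S t) (y + theta).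
Proof.
  intros Ht. unfold bound.
  replace (T - 1 - t)%nat with (S (T - 1 - S t)) by lia.
  rewrite sum_from1_shift, bound_term_succ.
  rewrite (sum_from1_ext _ _ (fun n =>
    alpha * F t (y + theta - s (S t)) * bound_term (S t) (y + theta) n))
    by (intros; apply bound_term_succ).
  rewrite sum_from1_scal.
  unfold bound_term at 1. rewrite Nat.add_0_r. simpl. ring.
Qed.

Hypothesis HT : (1 <= T)%nat.
Hypothesis Halpha : 0 <= alpha.
Hypothesis Htheta : 0 <= theta.
Hypothesis HFnonneg : forall t x, (t < T)%nat -> 0 <= F t x.
Hypothesis HFmono : forall t x y, (t < T)%nat -> x <= y -> F t x <= F t y.
Hypothesis Hgamma : forall t, (t < T)%nat -> 0 <= gamma t.

Lemma bound_nonneg t y : (t <= T - 1)%nat -> 0 <= bound t y.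
Proof.
  intros Ht. revert y. pattern t. apply (nat_down_ind _ (T - 1)); [| |exact Ht].
  - intros y. rewrite bound_last. apply Rmult_le_pos; [apply Hgamma; lia|exact Htheta].
  - intros t' Ht' IH y. rewrite bound_step by exact Ht'.
    apply Rplus_le_le_0_compat; [apply Rmult_le_pos; [apply Hgamma; lia|exact Htheta]|].
    apply Rmult_le_pos; [apply Rmult_le_pos; [exact Halpha|apply HFnonneg; lia]|apply IH].
Qed.

Lemma bound_mono t y y' : (t <= T - 1)%nat -> y <= y' -> bound t y <= bound t y'.
Proof.
  intros Ht. revert y y'. pattern t. apply (nat_down_ind _ (T - 1)); [| |exact Ht].
  - intros y y' _. rewrite !bound_last. lra.
  - intros t' Ht' IH y y' Hy. rewrite (bound_step t' y), (bound_step t' y') by exact Ht'.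
    apply Rplus_le_compat_l. rewrite !Rmult_assoc. apply Rmult_le_compat_l; [exact Halpha|].
    apply Rmult_le_compat.
    + apply HFnonneg; lia.
    + apply bound_nonneg; lia.
    + apply HFmono; [lia|lra].
    + apply IH; lra.
Qed.

End Bound.

Section Estimate.
Variables (T : nat) (alpha theta : R) (c K : nat -> R) (G F : nat -> R -> R)
          (mu gamma : nat -> R).

Local Notation s := (s_ T alpha theta c K G F mu).
Local Notation psb := (psibar T alpha theta c K G F mu gamma).
Local Notation phb := (phibar T alpha theta c K G F mu gamma).
Local Notation B := (bound T alpha theta F gamma s).

Lemma psibar_step t x y : (t < T - 1)%nat ->
  psb t x y =
  if Rlt_dec y (s (S t) - theta) then gamma t * x
  else gamma t * x + alpha *
    sum_f_R0 (fun i => phb (S t) x (y - zg theta (Z.of_nat i - 1)) *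
                       ftab theta F t (Z.of_nat i - 1))
             (Z.to_nat (nidx theta y (s (S t)))).
Proof.
  intros Ht. unfold psibar, phibar.
  replace (T - 1 - t)%nat with (S (T - 1 - S t)) by lia. cbn [psiphi fst snd].
  now replace (T - 1 - S (T - 1 - S t))%nat with t by lia.
Qed.

Lemma phibar_step t x y : (t < T - 1)%nat ->
  phb t x y =
  if Rlt_dec y (s t) then 0
  else if Rlt_dec (y - x) (s t) then psb t (y - s t + theta) y else psb t x y.
Proof.
  intros Ht. unfold psibar, phibar.
  replace (T - 1 - t)%nat with (S (T - 1 - S t)) by lia. cbn [psiphi fst snd].
  now replace (T - 1 - S (T - 1 - S t))%nat with t by lia.
Qed.

Lemma phibar_last x y :
  phb (T - 1) x y = if Rlt_dec y (s (T - 1)) then 0 else gamma (T - 1)%nat * x.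
Proof. unfold phibar. now rewrite Nat.sub_diag. Qed.

Lemma s_on_grid t : (t < T - 1)%nat -> exists m, s t = zg theta m.
Proof.
  intros Ht. unfold s_. replace (T - 1 - t)%nat with (S (T - 1 - S t)) by lia.
  cbn [stage snd]. destruct Req_EM_T; eexists; reflexivity.
Qed.

Hypothesis HT : (1 <= T)%nat.
Hypothesis Halpha : 0 <= alpha.
Hypothesis Htheta : 0 < theta.
Hypothesis HFmono : forall t x y, (t < T)%nat -> x <= y -> F t x <= F t y.
Hypothesis HFneg : forall t x, (t < T)%nat -> x < 0 -> F t x = 0.
Hypothesis Hgamma : forall t, (t < T)%nat -> 0 <= gamma t.

Lemma F_nonneg t x : (t < T)%nat -> 0 <= F t x.
Proof. intros Ht. apply cdf_nonneg; intros; [apply HFmono|apply HFneg]; assumption. Qed.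

Lemma ftab_nonneg t n : (t < T)%nat -> 0 <= ftab theta F t n.
Proof.
  intros Ht. unfold ftab. rewrite zg_succ.
  assert (F t (zg theta n) <= F t (zg theta n + theta)) by (apply HFmono; [exact Ht|lra]). lra.
Qed.

Lemma psibar_le_bound t : (t < T - 1)%nat ->
  (forall j, phb (S t) theta (zg theta j) <= B (S t) (zg theta j)) ->
  forall j, psb t theta (zg theta j) <= B t (zg theta j).
Proof.
  intros Ht IH j. rewrite psibar_step, bound_step by exact Ht.
  set (y := zg theta j). set (Bnext := B (S t) (y + theta)).
  assert (HBnext : 0 <= Bnext) by (apply (bound_nonneg _ _ _ _ _ _ HT Halpha (Rlt_le _ _ Htheta) F_nonneg Hgamma); lia).
  assert (HFy : 0 <= F t (y + theta - s (S t))) by (apply F_nonneg; lia).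
  destruct Rlt_dec as [Hbelow|Habove].
  { assert (0 <= alpha * F t (y + theta - s (S t)) * Bnext) by
      (apply Rmult_le_pos; [apply Rmult_le_pos|]; assumption).
    lra. }
  apply Rplus_le_compat_l.
  set (N := nidx theta y (s (S t))).
  destruct (nidx_spec theta Htheta y (s (S t))) as [HN1 HN2]. fold N in HN1, HN2.
  assert (HN : (-1 < N)%Z).
  { apply (zg_lt_inv theta Htheta). unfold zg at 1. simpl IZR. lra. }
  assert (Hterms : sum_f_R0 (fun i => phb (S t) theta (y - zg theta (Z.of_nat i - 1)) *
                                      ftab theta F t (Z.of_nat i - 1)) (Z.to_nat N)
                   <= Bnext * sum_f_R0 (fun i => ftab theta F t (Z.of_nat i - 1)) (Z.to_nat N)).
  { rewrite scal_sum. apply sum_Rle. intros i _.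
    rewrite Rmult_comm. apply Rmult_le_compat_l; [apply ftab_nonneg; lia|].
    unfold y. rewrite zg_sub. eapply Rle_trans; [apply IH|].
    apply (bound_mono _ _ _ _ _ _ HT Halpha (Rlt_le _ _ Htheta) F_nonneg HFmono Hgamma); [lia|].
    rewrite <- zg_sub. unfold zg at 2. rewrite minus_IZR, <- INR_IZR_INZ.
    pose proof (Rmult_le_pos _ _ (pos_INR i) (Rlt_le _ _ Htheta)). unfold y. lra. }
  assert (Hmass : sum_f_R0 (fun i => ftab theta F t (Z.of_nat i - 1)) (Z.to_nat N)
                  = F t (zg theta N)).
  { rewrite ftab_telescope, Z2Nat.id by lia.
    rewrite (HFneg t (zg theta (-1))); [ring|lia|unfold zg; simpl IZR; lra]. }
  assert (HFN : F t (zg theta N) <= F t (y + theta - s (S t))).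
  { apply HFmono; [lia|]. replace N with (N - 1 + 1)%Z by ring. rewrite zg_succ. lra. }
  rewrite Hmass in Hterms.
  assert (0 <= F t (zg theta N)) by (apply F_nonneg; lia).
  replace (alpha * F t (y + theta - s (S t)) * Bnext)
    with (alpha * (Bnext * F t (y + theta - s (S t)))) by ring.
  apply Rmult_le_compat_l; [exact Halpha|].
  eapply Rle_trans; [exact Hterms|]. apply Rmult_le_compat_l; assumption.
Qed.

Lemma phibar_le_bound t : (t < T - 1)%nat ->
  (forall j, psb t theta (zg theta j) <= B t (zg theta j)) ->
  forall j, phb t theta (zg theta j) <= B t (zg theta j).
Proof.
  intros Ht IH j. rewrite phibar_step by exact Ht.
  destruct Rlt_dec; [apply (bound_nonneg _ _ _ _ _ _ HT Halpha (Rlt_le _ _ Htheta) F_nonneg Hgamma); lia|].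
  destruct Rlt_dec as [Hnear|]; [|apply IH].
  destruct (s_on_grid t Ht) as [m Hm]. rewrite Hm in *.
  assert (j = m) as -> by (apply (zg_window_eq theta Htheta); lra).
  replace (zg theta m - zg theta m + theta) with theta by ring. apply IH.
Qed.

Lemma phibar_grid_le_bound t : (t <= T - 1)%nat ->
  forall j, phb t theta (zg theta j) <= B t (zg theta j).
Proof.
  apply (nat_down_ind (fun t => forall j, phb t theta (zg theta j) <= B t (zg theta j))).
  - intros j. rewrite phibar_last, bound_last.
    destruct Rlt_dec; [|lra].
    apply Rmult_le_pos; [apply Hgamma; lia|lra].
  - intros t' Ht' IH. apply phibar_le_bound, psibar_le_bound; assumption.
Qed.

End Estimate.
Theorem lemma4p9
  (T : nat) (alpha theta : R) (c K : nat -> R) (G F : nat -> R -> R)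
  (mu gamma : nat -> R)
  (HT : (2 <= T)%nat)
  (Halpha : 0 < alpha <= 1)
  (Htheta : 0 < theta)
  (HK : forall t, (t < T)%nat -> 0 <= K t)
  (* F_t is the distribution function of a nonnegative demand D_t *)
  (HFmono : forall t x y, (t < T)%nat -> x <= y -> F t x <= F t y)
  (HFrc : forall t x, (t < T)%nat -> filterlim (F t) (at_right x) (locally (F t x)))
  (HFneg : forall t x, (t < T)%nat -> x < 0 -> F t x = 0)
  (HFinf : forall t, (t < T)%nat -> is_lim (F t) p_infty 1)
  (* mu t = E[D_t] = int_0^oo (1 - F_t), finite *)
  (Hmu : forall t, (t < T)%nat ->
     is_RInt_gen (fun x => 1 - F t x) (at_point 0) (Rbar_locally p_infty) (mu t))
  (* all expectations appearing are finite *)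
  (Hfin : H_expectations_finite T alpha theta c K G F mu)
  (* (i) convexity and coercivity of C_t *)
  (Hconv : forall t x y l, (t < T)%nat -> 0 <= l <= 1 ->
     Cfun alpha c G mu t (l * x + (1 - l) * y)
       <= l * Cfun alpha c G mu t x + (1 - l) * Cfun alpha c G mu t y)
  (Hcoer : forall t M, (t < T)%nat -> exists N, forall y, N < Rabs y ->
     M < Cfun alpha c G mu t y)
  (* (ii) *)
  (HKdec : forall t, (t <= T - 2)%nat -> alpha * K (S t) <= K t)
  (* (iii) *)
  (Hgamma : forall t, (t < T)%nat -> 0 <= gamma t /\ forall x y,
     Rabs (Cfun alpha c G mu t x - Cfun alpha c G mu t y) <= gamma t * Rabs (x - y)) :
  forall (j : Z) (t : nat), (t <= T - 2)%nat ->
    psibar T alpha theta c K G F mu gamma t theta (zg theta j)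
    <= gamma t * theta + theta *
       sum_from1 (T - 1 - t) (fun n => alpha ^ n * gamma (t + n)%nat *
         prod_upto n (fun m => F (t + m)%nat
           (zg theta j + INR (m + 1) * theta - s_ T alpha theta c K G F mu (t + m + 1)))).
Proof.
  intros j t Ht.
  assert (HT1 : (1 <= T)%nat) by lia.
  assert (Halpha0 : 0 <= alpha) by lra.
  assert (Hgamma0 : forall t, (t < T)%nat -> 0 <= gamma t) by (intros; apply Hgamma; assumption).
  apply (psibar_le_bound T alpha theta c K G F mu gamma HT1 Halpha0 Htheta HFmono HFneg Hgamma0);
    [lia|intros j'].
  apply (phibar_grid_le_bound T alpha theta c K G F mu gamma HT1 Halpha0 Htheta HFmono HFneg
           Hgamma0).
  lia.
Qed.
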